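(* Let $R$ be a commutative ring with identity such that $4\le \gamma_t(\Gamma(R))<\infty$. Then $\gamma(\Gamma(R))=\gamma_t(\Gamma(R))$.
   Context: All rings are commutative with identity. The zero-divisor graph $\Gamma(R)$ has vertex set $Z(R)^*$ (nonzero zero-divisors); distinct $r,s$ are adjacent iff $rs=0$, and $x$ is adjacent to itself iff $x^2=0$. A dominating set is $X\subseteq Z(R)^*$ such that every vertex not in $X$ is adjacent to some element of $X$; a total dominating set is $X$ such that every vertex (including those in $X$) is adjacent to some element of $X$ (self-adjacency counts). $\gamma,\gamma_t$ are the respective minimum cardinalities. *)

From mathcomp Require Import all_boot all_algebra.
Set Implicit Arguments. Unset Strict Implicit. Unset Printing Implicit Defensive.
Import GRing.Theory.
Local Open Scope ring_scope.

Definition zero_divisor (R : comPzRingType) (x : R) : Prop :=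
  exists y : R, y != 0 /\ x * y = 0.

Definition zdg_vertex (R : comPzRingType) (x : R) : Prop :=
  x != 0 /\ zero_divisor x.

(* adjacency in Gamma(R): r ~ s iff r s = 0 (for r = s this is the loop x^2 = 0) *)
Definition zdg_adj (R : comPzRingType) (r s : R) : Prop := r * s = 0.

Definition zdg_dominating (R : comPzRingType) (X : seq R) : Prop :=
  (forall x, x \in X -> zdg_vertex x) /\
  (forall v, zdg_vertex v -> v \notin X -> exists2 x, x \in X & zdg_adj v x).

Definition zdg_total_dominating (R : comPzRingType) (X : seq R) : Prop :=
  (forall x, x \in X -> zdg_vertex x) /\
  (forall v, zdg_vertex v -> exists2 x, x \in X & zdg_adj v x).

Definition zdg_domination_number (R : comPzRingType) (n : nat) : Prop :=
  (exists X : seq R, [/\ uniq X, zdg_dominating X & size X = n]) /\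
  (forall X : seq R, zdg_dominating X -> (n <= size X)%N).

Definition zdg_total_domination_number (R : comPzRingType) (n : nat) : Prop :=
  (exists X : seq R, [/\ uniq X, zdg_total_dominating X & size X = n]) /\
  (forall X : seq R, zdg_total_dominating X -> (n <= size X)%N).

From mathcomp Require Import all_boot all_algebra.
From mathcomp Require Import ring.
From Stdlib Require Import Classical.
Set Implicit Arguments. Unset Strict Implicit. Unset Printing Implicit Defensive.
Import GRing.Theory.
Local Open Scope ring_scope.

(* Every dominating set X can be turned into a total dominating set of size at
   most max(|X|, 2).  Call x in X isolated if it has no neighbour in X; if there
   is none, X is already total dominating.  Otherwise, for an isolated x, either
   - x^2 u = 0 for some u in X: swap x for the square-zero vertex x u;
   - x^2 <> x: then x^2 lies in X (nothing in X can dominate it), and x can be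
     swapped for any annihilator of x, which is adjacent to x^2;
   - x = e is idempotent and ann(e) contains z, c <> 0 with z c = 0: then e + z
     is isolated in X and can be swapped for c, which is adjacent to e;
   - x = e is idempotent and ann(e) = (1 - e)R has no zero divisors: then 1 - e
     together with e or with a neighbour (or copy) of each element of X other
     than e is total dominating.
   Each swap keeps the size and decreases the number of isolated elements.
   Since gamma_t >= 3, the bound max(|X|, 2) forces gamma_t <= |X|. *)

Lemma seq_choice (T : eqType) (P : T -> T -> Prop) (s : seq T) :
  (forall x, x \in s -> exists y, P x y) ->
  exists g : T -> T, forall x, x \in s -> P x (g x).
Proof.
elim: s => [|y s IHs] Hs; first by exists id.
have [gy Pygy] := Hs y (mem_head y s).
have [g Pg] := IHs (fun x xs => Hs x (mem_behead (s := y :: s) xs)).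
exists (fun x => if x == y then gy else g x) => x.
by rewrite inE; case: eqP => [->|_ /= /Pg].
Qed.

Lemma sub_in_count (T : eqType) (a1 a2 : pred T) (s : seq T) :
  {in s, subpred a1 a2} -> (count a1 s <= count a2 s)%N.
Proof.
move=> s12; rewrite -(eq_in_count (a1 := predI a1 (mem s))) => [|y ys].
  by apply: sub_count => y /andP [a1y ys]; apply: s12.
by rewrite /= ys andbT.
Qed.

Section ZeroDivisorGraph.
Variable R : comPzRingType.
Implicit Types (X T : seq R) (x w e : R).

Definition isolated X x : bool := all (fun u => x * u != 0) X.

Definition defect X : nat := count (isolated X) X.

Lemma isolatedP X x u : isolated X x -> u \in X -> x * u != 0.
Proof. by move=> /allP Xx /Xx. Qed.

Lemma total_dominating_of_defect0 X :
  zdg_dominating X -> defect X = 0%N -> zdg_total_dominating X.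
Proof.
move=> [Xv Xdom] /eqP; rewrite -leqn0 leqNgt -has_count => /hasPn noiso.
split=> // v vv; case: (boolP (v \in X)) => [vX|]; last exact: Xdom.
by have /allPn [u uX] := noiso v vX; rewrite negbK => /eqP; exists u.
Qed.

(* Witnessing x r in the new set keeps every vertex dominated by x dominated,
   and makes w non-isolated since w x = 0. *)
Definition exchangeable X : Prop :=
  exists x w r, [/\ x \in X, isolated X x, zdg_vertex w, w * x = 0
                  & x * r \in w :: rem x X].

Section Exchange.
Variables (X : seq R) (x w r : R).
Hypotheses (xX : x \in X) (isoXx : isolated X x) (wx : w * x = 0).
Hypothesis xr_in : x * r \in w :: rem x X.

Lemma dominating_exchange :
  zdg_dominating X -> zdg_vertex w -> zdg_dominating (w :: rem x X).
Proof.
move=> [Xv Xdom] vw; split=> [y|v vv].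
  by rewrite inE => /predU1P [->|/mem_rem /Xv].
rewrite inE negb_or => /andP [vw' vrem].
have [vX|vX] := boolP (v \in X).
  have -> : v = x by apply/eqP; apply: contraNT vrem => /rem_mem; apply.
  by exists w; rewrite ?mem_head // /zdg_adj mulrC.
have [u uX vu] := Xdom v vv vX; have [ux|] := eqVneq u x.
  by exists (x * r); rewrite // /zdg_adj mulrA -ux vu mul0r.
by move=> /rem_mem/(_ uX) urem; exists u; rewrite // inE urem orbT.
Qed.

Lemma defect_exchange : (defect (w :: rem x X) < defect X)%N.
Proof.
have wnoiso : ~~ isolated (w :: rem x X) w.
  by apply/allPn; exists (x * r); rewrite // negbK mulrA wx mul0r.
rewrite /defect.
rewrite -[count _ (w :: _)]/(isolated _ w + count (isolated _) (rem x X))%N.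
rewrite (negbTE wnoiso) add0n.
apply: (@leq_ltn_trans (count (isolated X) (rem x X))).
  apply: sub_in_count => y /mem_rem yX /allP isoy; apply/allP => u uX.
  have [->|ux] := eqVneq u x; first by rewrite mulrC; apply: isolatedP isoXx yX.
  by apply: isoy; rewrite inE (rem_mem ux uX) orbT.
rewrite count_rem xX isoXx subn1 prednK // -has_count.
by apply/hasP; exists x.
Qed.

End Exchange.

Lemma exchangeableP X : zdg_dominating X -> exchangeable X ->
  exists X', [/\ zdg_dominating X', size X' = size X & (defect X' < defect X)%N].
Proof.
move=> domX [x [w [r [xX isoXx vw wx xr_in]]]]; exists (w :: rem x X); split.
- exact: dominating_exchange wx xr_in domX vw.
- by rewrite (perm_size (perm_to_rem xX)).
- exact: defect_exchange xX isoXx wx xr_in.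
Qed.

Lemma exchangeable_sqr_ann X x u : zdg_dominating X -> x \in X -> isolated X x ->
  u \in X -> x * x * u = 0 -> exchangeable X.
Proof.
move=> domX xX isoXx uX xxu; have [xn0 _] := domX.1 x xX.
have xuxE : x * u * x = 0 by rewrite mulrAC.
exists x, (x * u), u; split=> //; last exact: mem_head.
by split; [exact: isolatedP isoXx uX | exists x].
Qed.

Lemma exchangeable_non_idempotent X x : zdg_dominating X -> x \in X ->
  isolated X x -> {in X, forall u, x * x * u != 0} -> x * x != x ->
  exchangeable X.
Proof.
move=> [Xv Xdom] xX isoXx sqr_noann nidem.
have [xn0 [y [yn0 xy]]] := Xv x xX.
have sqrX : x * x \in X.
  apply: contraT => sqr_notX.
  have sqrv : zdg_vertex (x * x).
    split; last by exists y; split=> //; rewrite -mulrA xy mulr0.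
    by apply/eqP => sqr0; move: (sqr_noann x xX); rewrite sqr0 mul0r eqxx.
  by have [u uX /eqP] := Xdom _ sqrv sqr_notX; rewrite (negbTE (sqr_noann u uX)).
exists x, y, x; split=> //.
- by split=> //; exists x; split=> //; rewrite mulrC.
- by rewrite mulrC.
- by rewrite inE (rem_mem nidem sqrX) orbT.
Qed.

Lemma exchangeable_idempotent X e z c : zdg_dominating X -> e \in X ->
  isolated X e -> e * e = e -> z != 0 -> c != 0 ->
  e * z = 0 -> e * c = 0 -> z * c = 0 -> exchangeable X.
Proof.
move=> [Xv Xdom] eX isoXe ee zn0 cn0 ez ec zc; have [en0 _] := Xv e eX.
have ann_ez u : (e + z) * u = 0 -> e * u = 0.
  have -> : e * u = e * ((e + z) * u) by rewrite mulrA mulrDr ee ez addr0.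
  by move=> ->; rewrite mulr0.
have isoXez : isolated X (e + z).
  apply/allP => u uX; apply/eqP => /ann_ez /eqP.
  by rewrite (negbTE (isolatedP isoXe uX)).
have ezn0 : e + z != 0.
  apply/eqP => ez0; move: (ann_ez e); rewrite ez0 mul0r ee => /(_ erefl) /eqP.
  by rewrite (negbTE en0).
have ezv : zdg_vertex (e + z).
  by split=> //; exists c; split=> //; rewrite mulrDl ec zc addr0.
have ezX : e + z \in X.
  apply: contraT => ez_notX; have [u uX /ann_ez /eqP] := Xdom _ ezv ez_notX.
  by rewrite (negbTE (isolatedP isoXe uX)).
have e_neq_ez : e != e + z by rewrite -subr_eq0 opprD addrA subrr add0r oppr_eq0.
exists (e + z), c, e; split=> //.
- by split=> //; exists e; split=> //; rewrite mulrC.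
- by rewrite mulrC mulrDl ec zc addr0.
- by rewrite mulrDl ee (mulrC z) ez addr0 inE (rem_mem e_neq_ez eX) orbT.
Qed.

Section Idempotent.
Variables (X : seq R) (e : R).
Hypotheses (domX : zdg_dominating X) (eX : e \in X) (ee : e * e = e).
Hypothesis ann_domain :
  forall z c, z != 0 -> c != 0 -> e * z = 0 -> e * c = 0 -> z * c != 0.

Let f := 1 - e.

Let ef : e * f = 0.
Proof. by rewrite /f mulrBr mulr1 ee subrr. Qed.

Let en0 : e != 0.
Proof. by case: (domX.1 e eX). Qed.

Let fn0 : f != 0.
Proof.
have [_ [y [yn0 ey]]] := domX.1 e eX.
apply: contraNneq yn0 => /eqP; rewrite subr_eq0 => /eqP e1.
by rewrite -ey -e1 mul1r.
Qed.

Let ann_compl a b : a * b = 0 -> a * f != 0 -> b * f = 0.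
Proof.
move=> ab af; apply/eqP/negPn/negP => bf.
have ef' u : e * (u * f) = 0 by rewrite mulrCA ef mulr0.
by have := ann_domain af bf (ef' a) (ef' b); rewrite mulrACA ab mul0r eqxx.
Qed.

Lemma total_dominating_compl (S : seq R) :
  (forall t, t \in S -> t != 0 /\ t * f = 0) -> S != [::] ->
  {in rem e X, forall u, (u * f = 0 -> u \in S) /\
                         (u * f != 0 -> exists2 t, t \in S & u * t = 0)} ->
  zdg_total_dominating (f :: S).
Proof.
move=> S_ann S_nil S_cov; split.
  move=> t; rewrite inE => /predU1P [->|/S_ann [tn0 tf]].
    by split=> //; exists e; split=> //; rewrite mulrC.
  by split=> //; exists f.
move=> v vv; have [ve|ve] := eqVneq (v * e) 0.
  have [t0 t0S] : exists t0, t0 \in S.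
    by case: S S_nil {S_ann S_cov} => // t0 S; exists t0; rewrite mem_head.
  have [_ t0f] := S_ann t0 t0S.
  exists t0; rewrite /zdg_adj ?inE ?t0S ?orbT //.
  have -> : v * t0 = (v * e) * t0 + v * (t0 * f) by rewrite /f; ring.
  by rewrite ve t0f mul0r mulr0 addr0.
have [vf|vf] := eqVneq (v * f) 0; first by exists f; rewrite ?mem_head.
have [vX|vX] := boolP (v \in X).
  have vrem : v \in rem e X.
    by apply: rem_mem vX; apply: contraNneq vf => ->; rewrite ef.
  by have [t tS vt] := (S_cov v vrem).2 vf; exists t; rewrite // inE tS orbT.
have [u uX vu] := domX.2 v vv vX.
have urem : u \in rem e X.
  by apply: rem_mem uX; apply: contraNneq ve => <-; apply/eqP.
by exists u; rewrite // inE (S_cov u urem).1 ?orbT //; apply: ann_compl vu vf.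
Qed.

Lemma total_dominating_idempotent :
  exists2 T : seq R, zdg_total_dominating T & (size T <= maxn (size X) 2)%N.
Proof.
have partner u : u \in rem e X -> exists t,
    [/\ u * f = 0 -> t = u, u * f != 0 -> u * t = 0, t != 0 & t * f = 0].
  move=> /mem_rem /domX.1 [un0 [y [yn0 uy]]].
  have [uf|uf] := eqVneq (u * f) 0; first by exists u; split=> //; rewrite uf eqxx.
  exists y; split=> //; first by move/eqP; rewrite (negbTE uf).
  exact: ann_compl uy uf.
have [g Pg] := seq_choice partner.
case remX: (rem e X) => [|u0 s].
  exists [:: f; e]; last exact: leq_maxr.
  apply: total_dominating_compl; last by rewrite remX.
  - by move=> t /[1!inE] /eqP ->.
  - by [].
exists (f :: map g (rem e X)); last first.
  by rewrite /= size_map (perm_size (perm_to_rem eX)) leq_maxl.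
apply: total_dominating_compl; last 2 first.
- by rewrite remX.
- move=> u urem; have [gu_u u_gu _ _] := Pg u urem.
  split=> [uf|uf]; last by exists (g u); [exact: map_f | exact: u_gu].
  by rewrite -{1}(gu_u uf) map_f.
by move=> _ /mapP [u urem ->]; have [_ _ gun0 guf] := Pg u urem.
Qed.

End Idempotent.

Lemma isolated_cases X x : zdg_dominating X -> x \in X -> isolated X x ->
  exchangeable X \/
  exists2 T : seq R, zdg_total_dominating T & (size T <= maxn (size X) 2)%N.
Proof.
move=> domX xX isoXx.
have [/hasP [u uX /eqP xxu]|/hasPn sqr_noann] :=
  boolP (has (fun u => x * x * u == 0) X).
  by left; exact: exchangeable_sqr_ann domX xX isoXx uX xxu.
have [idem|nidem] := eqVneq (x * x) x.
  2: by left; exact: exchangeable_non_idempotent domX xX isoXx sqr_noann nidem.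
have [[z [c [zn0 cn0 xz xc zc]]]|no_pair] :=
  classic (exists z c, [/\ z != 0, c != 0, x * z = 0, x * c = 0 & z * c = 0]).
  by left; exact: exchangeable_idempotent domX xX isoXx idem zn0 cn0 xz xc zc.
right; apply: (total_dominating_idempotent domX xX idem) => z c zn0 cn0 xz xc.
by apply/eqP => zc; apply: no_pair; exists z, c.
Qed.

Lemma total_dominating_of_dominating X : zdg_dominating X ->
  exists2 T : seq R, zdg_total_dominating T & (size T <= maxn (size X) 2)%N.
Proof.
have [m] := ubnP (defect X); elim: m X => // m IHm X; rewrite ltnS => leXm domX.
have [defect0|] := posnP (defect X).
  by exists X; [exact: total_dominating_of_defect0 | exact: leq_maxl].
rewrite -has_count => /hasP [x xX isoXx].
have [/(exchangeableP domX) [X' [domX' sizeX' ltX']]|//] :=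
  isolated_cases domX xX isoXx.
have [T totT sizeT] := IHm X' (leq_trans ltX' leXm) domX'.
by exists T; rewrite // -sizeX'.
Qed.

Lemma dominating_of_total X : zdg_total_dominating X -> zdg_dominating X.
Proof. by case=> Xv Xdom; split=> // v /Xdom [x xX vx] _; exists x. Qed.

End ZeroDivisorGraph.

Theorem theorem4p2 (R : comPzRingType) (n : nat) :
  zdg_total_domination_number R n -> (4 <= n)%N ->
  zdg_domination_number R n.
Proof.
move=> [[X0 [uniqX0 totX0 sizeX0]] minT] n4; split.
  by exists X0; split=> //; apply: dominating_of_total.
move=> X /total_dominating_of_dominating [T /minT nT sizeT].
move: (leq_trans nT sizeT); rewrite leq_max => /orP [//|n2].
by have := leq_trans n4 n2.
Qed.
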